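(* For a matroid $M$ of rank $r$ on $E=\{0,\dots,n\}$, \[ \int_{X_E} c(\mathcal Q_M) = \begin{cases}1 & \text{if $M$ is a loop, or $M=U_{1,E}$},\\ 0&\text{otherwise,}\end{cases}\qquad \int_{X_E} c(\mathcal S_M^{\vee}) = \begin{cases}1 & \text{if $M$ is a coloop, or $M=U_{n,E}$},\\ 0&\text{otherwise.}\end{cases} \]
   Context: $X_E$ is the $n$-dimensional permutohedral variety with $T=(\mathbb C^* )^E$-fixed points $p_\sigma$ indexed by permutations $\sigma$ of $E$, and $K_T^0(X_E)$ embeds into $\prod_\sigma\mathbb Z[T_0^{\pm1},\dots,T_n^{\pm1}]$ via restriction. $B_\sigma(M)$ is the lexicographically first basis of $M$ for the order $\sigma(0)\prec\cdots\prec\sigma(n)$; $[\mathcal S_M],[\mathcal Q_M]\in K_T^0(X_E)$ are the classes restricting at $p_\sigma$ to $\sum_{i\in B_\sigma(M)}T_i^{-1}$ and $\sum_{i\notin B_\sigma(M)}T_i^{-1}$; $c(\cdot)$ is the total non-equivariant Chern class, $\vee$ the dual. A loop (resp. coloop) as a matroid means a matroid of rank $0$ (resp. $1$) on a one-element ground set; $U_{r,E}$ is the uniform matroid of rank $r$ on $E$. *)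

From HB Require Import structures.
From mathcomp Require Import all_boot all_order all_algebra all_fingroup.
From mathcomp Require Import mpoly.
Set Implicit Arguments. Unset Strict Implicit. Unset Printing Implicit Defensive.
Import Order.TTheory GRing.Theory Num.Theory.
Local Open Scope ring_scope.

Definition is_bases n (B : {set {set 'I_n.+1}}) : bool :=
  (B != set0) &&
  [forall b1 in B, forall b2 in B, forall x in b1 :\: b2,
      exists y in b2 :\: b1, (y |: (b1 :\ x)) \in B].

Record matroid (n : nat) := Matroid {
  bases : {set {set 'I_n.+1}};
  basesP : is_bases bases }.

Definition uniform_bases n (r : nat) : {set {set 'I_n.+1}} :=
  [set S : {set 'I_n.+1} | #|S| == r].

Definition is_loop n (M : matroid n) : bool :=
  (n == 0%N) && (bases M == [set set0]).
Definition is_coloop n (M : matroid n) : bool :=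
  (n == 0%N) && (bases M == [set setT]).

(* Lexicographic comparison for the order sigma(0) < ... < sigma(n):
   A is lex-before B iff at the first position k where they differ,
   sigma k lies in A but not in B.  *)
Definition lex_lt n (s : {perm 'I_n.+1}) (A B : {set 'I_n.+1}) : bool :=
  [exists k : 'I_n.+1,
     [&& s k \in A, s k \notin B &
         [forall j : 'I_n.+1, (j < k)%N ==> ((s j \in A) == (s j \in B))]]].

Definition lexfirst n (s : {perm 'I_n.+1}) (M : matroid n) : {set 'I_n.+1} :=
  odflt set0 [pick B in bases M | [forall B' in bases M, ~~ lex_lt s B' B]].

(* H_T^*(pt) = Z[t_0,...,t_n]; the character T_i has first Chern class t_i = 'X_i. *)
Definition HT n := {mpoly int[n.+1]}.

(* restriction at p_sigma of the equivariant total Chern class of [Q_M]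
   = sum_{i notin B_sigma} T_i^{-1}: Chern roots -t_i *)
Definition cQ n (M : matroid n) (s : {perm 'I_n.+1}) : HT n :=
  \prod_(i : 'I_n.+1 | i \notin lexfirst s M) (1 - 'X_i).

(* restriction at p_sigma of the equivariant total Chern class of [S_M]^vee
   = sum_{i in B_sigma} T_i: Chern roots t_i *)
Definition cSdual n (M : matroid n) (s : {perm 'I_n.+1}) : HT n :=
  \prod_(i : 'I_n.+1 | i \in lexfirst s M) (1 + 'X_i).

(* equivariant Euler class of T_{p_sigma} X_E: the tangent characters are
   T_{sigma(i)} / T_{sigma(i+1)}, 0 <= i < n *)
Definition euler_tangent n (s : {perm 'I_n.+1}) : HT n :=
  \prod_(i < n) ('X_(s (widen_ord (leqnSn n) i)) - 'X_(s (lift ord0 i))).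

Definition homog_part n (d : nat) (p : HT n) : HT n :=
  @pihomog n.+1 int mdeg d p.

(* integral over X_E (dim n) of the non-equivariant class whose equivariant
   lift restricts to c at p_sigma: Atiyah--Bott localization applied to the
   degree-n part, computed in the fraction field of Z[t_0..t_n]. *)
Definition integral_XE n (c : {perm 'I_n.+1} -> HT n) : {fraction HT n} :=
  \sum_(s : {perm 'I_n.+1}) @FracField.tofrac (HT n) (homog_part n (c s))
    / @FracField.tofrac (HT n) (euler_tangent s).

(* By localization, the integral of a class is the sum over permutations s of the
   degree-n part of its restriction at p_s times 1/e_s, where
   e_s = prod_i (t_(s i) - t_(s (i+1))).  The degree-n part of c(Q_M) at p_s,
   prod_(i notin B_s) (1 - t_i), vanishes unless rank M <= 1, and that of
   c(S_M^vee), prod_(i in B_s) (1 + t_i), vanishes unless rank M >= n.  In the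
   extreme ranks 0 and n+1 the restriction does not depend on s, and
   sum_s 1/e_s = 0 unless n = 0.  In rank 1, B_s = {b} where b is the first
   element in the order s whose singleton is a basis, and the numerator is
   (-1)^n t_E / t_b.  Splitting a permutation off its first element and applying
   partial fractions inductively shows that the sum of 1/e_s over the s with a
   given b is 0 as soon as some singleton is not a basis, and
   prod_(w != b) 1/(t_b - t_w) otherwise; partial fractions of
   prod_w 1/(v - t_w) at v = 0 then sum the t_b^-1-weighted terms to
   (-1)^n / t_E.  Rank n is the mirror image: B_s is the complement of the last
   element whose complement is a basis, and reading s backwards changes e_s by
   (-1)^n. *)

From HB Require Import structures.
From mathcomp Require Import all_boot all_order all_algebra all_fingroup.
From mathcomp Require Import mpoly.
From mathcomp Require Import ring zify.
Set Implicit Arguments. Unset Strict Implicit. Unset Printing Implicit Defensive.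
Import Order.TTheory GRing.Theory Num.Theory.

Lemma big_permutations_cons (R : Type) (idx : R) (op : Monoid.com_law idx)
    (T : eqType) (S : seq T) (P : pred (seq T)) (F : seq T -> R) :
  uniq S -> S != [::] ->
  \big[op/idx]_(t <- permutations S | P t) F t =
  \big[op/idx]_(x <- S) \big[op/idx]_(t <- permutations (rem x S) | P (x :: t)) F (x :: t).
Proof.
move=> US nS; rewrite (perm_big _ (permutationsE _)); last by case: S nS {US}.
rewrite big_mkcond big_allpairs_dep undup_id //.
by under [RHS]eq_bigr do rewrite big_mkcond.
Qed.

Lemma big_permutations_rev (R : Type) (idx : R) (op : Monoid.com_law idx)
    (T : eqType) (S : seq T) (F : seq T -> R) :
  \big[op/idx]_(t <- permutations S) F (rev t) = \big[op/idx]_(t <- permutations S) F t.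
Proof.
have rev_inj : injective (@rev T) := can_inj (@revK T).
rewrite -(big_map rev xpredT F); apply/perm_big/uniq_perm => [||t].
- by rewrite map_inj_uniq ?permutations_uniq.
- exact: permutations_uniq.
by rewrite -[t in LHS]revK mem_map // !mem_permutations perm_rev.
Qed.

Lemma big_partition_seq (R : Type) (idx : R) (op : Monoid.com_law idx)
    (I J : eqType) (r : seq I) (s : seq J) (f : I -> J) (F : I -> R) :
  uniq s -> {in r, forall i, f i \in s} ->
  \big[op/idx]_(i <- r) F i = \big[op/idx]_(j <- s) \big[op/idx]_(i <- r | f i == j) F i.
Proof.
move=> Us fs.
transitivity (\big[op/idx]_(i <- r) \big[op/idx]_(j <- s | f i == j) F i).
  apply: eq_big_seq => i ri; under eq_bigl do rewrite eq_sym.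
  by rewrite -big_filter filter_pred1_uniq ?fs // big_seq1.
by rewrite (exchange_big_dep xpredT).
Qed.

Lemma filter_rem (T : eqType) (P : pred T) (S : seq T) y : uniq S ->
  [seq w <- rem y S | P w] = rem y [seq w <- S | P w].
Proof.
move=> US; rewrite !rem_filter ?filter_uniq // -!filter_predI.
by apply: eq_filter => w /=; rewrite andbC.
Qed.

Section FirstOf.
Variables (T : eqType) (L : pred T) (x0 : T).

(* [x0] is returned when no item of [p] satisfies [L]. *)
Definition first_of (p : seq T) : T := nth x0 p (find L p).

Lemma first_of_in t : has L t -> first_of t \in [seq w <- t | L w].
Proof. by move=> hL; rewrite mem_filter nth_find // mem_nth -?has_find. Qed.

Lemma first_of_cons y t : first_of (y :: t) = if L y then y else first_of t.
Proof. by rewrite /first_of /=; case: (L y). Qed.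

Lemma big_permutations_first_of (R : Type) (idx : R) (op : Monoid.com_law idx)
    (S : seq T) (b : T) (F : seq T -> R) : uniq S -> b \in S -> L b ->
  \big[op/idx]_(t <- permutations S | first_of t == b) F t =
  op (\big[op/idx]_(t <- permutations (rem b S)) F (b :: t))
     (\big[op/idx]_(y <- S | ~~ L y)
        \big[op/idx]_(t <- permutations (rem y S) | first_of t == b) F (y :: t)).
Proof.
move=> US bS Lb; have nS : S != [::] by apply: contraTneq bS => ->.
rewrite big_permutations_cons // (bigD1_seq b) //=; congr (op _ _).
  by apply: eq_bigl => t; rewrite first_of_cons Lb eqxx.
rewrite (bigID L) /= big1 ?Monoid.mul1m => [|y /andP[yb Ly]]; last first.
  by apply: big_pred0 => t; rewrite first_of_cons Ly (negbTE yb).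
apply: eq_big => [y | y /andP[_ Ly]].
  by apply/andb_idl; apply: contraNneq => ->.
by apply: eq_bigl => t; rewrite first_of_cons (negbTE Ly).
Qed.
End FirstOf.

Section PermSeq.
Variable n : nat.

Definition pseq (s : {perm 'I_n.+1}) : seq 'I_n.+1 := [seq s i | i <- enum 'I_n.+1].

Lemma size_pseq s : size (pseq s) = n.+1.
Proof. by rewrite size_map size_enum_ord. Qed.

Lemma nth_pseq s (j : 'I_n.+1) : nth ord0 (pseq s) j = s j.
Proof. by rewrite (nth_map ord0) ?size_enum_ord // nth_ord_enum. Qed.

Lemma mem_pseq s x : x \in pseq s.
Proof. by apply/mapP; exists ((s^-1)%g x); rewrite ?mem_enum ?permKV. Qed.

Lemma big_perm_pseq (R : Type) (idx : R) (op : Monoid.com_law idx) (F : seq 'I_n.+1 -> R) :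
  \big[op/idx]_(s : {perm 'I_n.+1}) F (pseq s) =
  \big[op/idx]_(p <- permutations (enum 'I_n.+1)) F p.
Proof.
have pseq_inj : injective pseq.
  by move=> s1 s2 E; apply/permP => i; rewrite -!nth_pseq E.
have U : uniq [seq pseq s | s <- index_enum {perm 'I_n.+1}].
  by rewrite map_inj_uniq ?index_enum_uniq.
rewrite -(big_map pseq xpredT F); apply/perm_big/uniq_perm => //.
  exact: permutations_uniq.
apply: (uniq_min_size U _ _).2 => [_ /mapP[s _ ->]|].
  rewrite mem_permutations; apply: uniq_perm => [||i]; rewrite ?enum_uniq ?mem_enum ?mem_pseq //.
  by rewrite map_inj_uniq ?enum_uniq //; apply: perm_inj.
rewrite size_permutations ?enum_uniq // size_enum_ord size_map.
by rewrite [index_enum _]unlock -enumT -cardT card_Sn.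
Qed.
End PermSeq.

Section Matroid.
Variables (n : nat) (M : matroid n).

Lemma bases_neq0 : bases M != set0.
Proof. by case: M => B /= /andP[]. Qed.

Lemma bases_exchange b1 b2 x : b1 \in bases M -> b2 \in bases M -> x \in b1 :\: b2 ->
  exists2 y, y \in b2 :\: b1 & y |: (b1 :\ x) \in bases M.
Proof.
case: M => B /= /andP[_ /forallP exB] b1B b2B xb.
have /existsP[y /andP[yb yB]] :=
  implyP (forallP (implyP (forallP (implyP (exB b1) b1B) b2) b2B) x) xb.
by exists y.
Qed.

Lemma card_bases_eq b1 b2 : b1 \in bases M -> b2 \in bases M -> #|b1| = #|b2|.
Proof.
have [k] := ubnP #|b1 :\: b2|; elim: k => // k IH in b1 b2 *.
move=> lt_k b1B b2B; have [e12|[x xb]] := set_0Vmem (b1 :\: b2).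
  have [e21|[x xb]] := set_0Vmem (b2 :\: b1).
    by apply/eqP; rewrite eqn_leq !subset_leq_card // -setD_eq0 ?e12 ?e21.
  by have [y] := bases_exchange b2B b1B xb; rewrite e12 inE.
have [y yb b'B] := bases_exchange b1B b2B xb.
move: xb yb; rewrite !inE => /andP[xb2 xb1] /andP[yb1 yb2].
rewrite -(IH _ _ _ b'B b2B); last first.
  have -> : (y |: (b1 :\ x)) :\: b2 = (b1 :\: b2) :\ x.
    apply/setP => w; rewrite !inE; case: eqP => [->|_] /=; first by rewrite yb2 !andbF.
    by rewrite andbCA.
  by move: lt_k; rewrite (cardsD1 x (b1 :\: b2)) !inE xb2 xb1.
by rewrite cardsU1 !inE (negbTE yb1) andbF (cardsD1 x b1) xb1.
Qed.

Definition matroid_rank : nat := \max_(B in bases M) #|B|.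

Lemma card_basis B : B \in bases M -> #|B| = matroid_rank.
Proof.
move=> BM; apply/eqP; rewrite eqn_leq (leq_bigmax_cond _ BM) /=.
by apply/bigmax_leqP => B' B'M; rewrite (card_bases_eq B'M BM).
Qed.

Lemma lex_lt_irr (s : {perm 'I_n.+1}) A : ~~ lex_lt s A A.
Proof. by apply/existsP => -[k /and3P[-> /negP]]. Qed.

Lemma lex_lt_trans (s : {perm 'I_n.+1}) : transitive (lex_lt s).
Proof.
move=> B A C /existsP[k1 /and3P[a1 b1 /forallP h1]] /existsP[k2 /and3P[b2 c2 /forallP h2]].
apply/existsP; case: (ltngtP k1 k2) => [lt12|lt21|/val_inj e12]; last by rewrite e12 b2 in b1.
- exists k1; rewrite a1 -(eqP (implyP (h2 k1) lt12)) b1 /=.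
  apply/forallP => j; apply/implyP => jk.
  by rewrite (eqP (implyP (h1 j) jk)) (implyP (h2 j) (ltn_trans jk lt12)).
- exists k2; rewrite (eqP (implyP (h1 k2) lt21)) b2 c2 /=.
  apply/forallP => j; apply/implyP => jk.
  by rewrite (eqP (implyP (h1 j) (ltn_trans jk lt21))) (implyP (h2 j) jk).
Qed.

(* [lexfirst] falls back to [set0] if no lex-minimal basis is picked; a basis
   with the fewest lex-smaller bases rules this out. *)
Lemma lexfirstP s : lexfirst s M \in bases M /\
  {in bases M, forall B, ~~ lex_lt s B (lexfirst s M)}.
Proof.
rewrite /lexfirst; case: pickP => [B /andP[BM /forallP minB]|none].
  by split => // B' B'M; exact: (implyP (minB B') B'M).
have /set0Pn[B0 B0M] := bases_neq0.
have [B BM minB] := @arg_minnP _ B0 (fun B => B \in bases M)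
  (fun B => #|[set B' in bases M | lex_lt s B' B]|) B0M.
have := none B; rewrite BM /= => /negbT/forallPn[B']; rewrite negb_imply negbK => /andP[B'M lt].
have : #|[set C in bases M | lex_lt s C B']| < #|[set C in bases M | lex_lt s C B]|.
  apply/proper_card/properP; split.
    by apply/subsetP => C; rewrite !inE => /andP[-> /lex_lt_trans]; apply.
  by exists B'; rewrite !inE ?B'M ?lt ?lex_lt_irr.
by rewrite ltnNge minB.
Qed.

Lemma lexfirst_eq s B : B \in bases M ->
  (forall B', B' \in bases M -> B' != B -> lex_lt s B B') -> lexfirst s M = B.
Proof.
move=> BM minB; have [LM minL] := lexfirstP s.
by apply/eqP/negPn/negP => /(minB _ LM); apply/negP/minL.
Qed.

Lemma card_lexfirst s : #|lexfirst s M| = matroid_rank.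
Proof. by rewrite card_basis //; case: (lexfirstP s). Qed.

Lemma bases_rank0 : matroid_rank = 0 -> bases M = [set set0].
Proof.
move=> r0; have basis0 B : B \in bases M -> B = set0.
  by move=> BM; apply/eqP; rewrite -cards_eq0 card_basis // r0.
apply/setP => B; rewrite inE; apply/idP/eqP => [/basis0 //|->].
by have /set0Pn[B0 B0M] := bases_neq0; rewrite -(basis0 _ B0M).
Qed.

Lemma bases_rank_full : matroid_rank = n.+1 -> bases M = [set setT].
Proof.
move=> rT; have basisT B : B \in bases M -> B = setT.
  by move=> BM; apply/eqP; rewrite eqEcard subsetT cardsT card_ord card_basis // rT ltnSn.
apply/setP => B; rewrite inE; apply/idP/eqP => [/basisT //|->].
by have /set0Pn[B0 B0M] := bases_neq0; rewrite -(basisT _ B0M).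
Qed.

Lemma bases_set1 B : bases M = [set B] -> matroid_rank = #|B|.
Proof. by move=> bM; rewrite (card_basis (_ : B \in bases M)) // bM set11. Qed.

Lemma is_loopE : is_loop M = (n == 0) && (matroid_rank == 0).
Proof.
rewrite /is_loop; congr (_ && _); apply/eqP/eqP => [/bases_set1 ->|/bases_rank0 //].
exact: cards0.
Qed.

Lemma is_coloopE : is_coloop M = (n == 0) && (matroid_rank == n.+1).
Proof.
rewrite /is_coloop; congr (_ && _); apply/eqP/eqP => [/bases_set1 ->|/bases_rank_full //].
by rewrite cardsT card_ord.
Qed.

Lemma rank_uniform r : bases M = uniform_bases n r -> matroid_rank = r.
Proof.
move=> bM; have /set0Pn[B0 B0M] := bases_neq0.
by rewrite -(card_basis B0M); move: B0M; rewrite bM inE => /eqP.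
Qed.

Definition singleton_basis (l : 'I_n.+1) : bool := [set l] \in bases M.
Definition cosingleton_basis (c : 'I_n.+1) : bool := [set~ c] \in bases M.

Lemma basis_rank1 B : matroid_rank = 1 -> B \in bases M ->
  exists2 l, B = [set l] & singleton_basis l.
Proof.
move=> r1 BM; have /cards1P[l El] : #|B| == 1 by rewrite card_basis // r1.
by exists l => //; rewrite /singleton_basis -El.
Qed.

Lemma basis_corank1 B : matroid_rank = n -> B \in bases M ->
  exists2 c, B = [set~ c] & cosingleton_basis c.
Proof.
move=> rn BM; have /cards1P[c Ec] : #|~: B| == 1.
  by have := cardsC B; rewrite card_ord card_basis // rn; lia.
by exists c; rewrite /cosingleton_basis -Ec setCK.
Qed.

Lemma exists_singleton_basis : matroid_rank = 1 -> exists l, singleton_basis l.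
Proof. by move=> r1; have /set0Pn[B0 /(basis_rank1 r1)[l _ Ll]] := bases_neq0; exists l. Qed.

Lemma exists_cosingleton_basis : matroid_rank = n -> exists c, cosingleton_basis c.
Proof. by move=> rn; have /set0Pn[B0 /(basis_corank1 rn)[c _ Cc]] := bases_neq0; exists c. Qed.

Lemma uniform_rank1E : matroid_rank = 1 ->
  (bases M == uniform_bases n 1) = all singleton_basis (enum 'I_n.+1).
Proof.
move=> r1; apply/eqP/allP => [bM l _|allL]; first by rewrite /singleton_basis bM inE cards1.
apply/setP => B; rewrite inE; apply/idP/idP => [BM|/cards1P[l ->]].
  by rewrite card_basis // r1.
by apply: allL; rewrite mem_enum.
Qed.

Lemma uniform_corank1E : matroid_rank = n ->
  (bases M == uniform_bases n n) = all cosingleton_basis (enum 'I_n.+1).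
Proof.
move=> rn; apply/eqP/allP => [bM c _|allC].
  by rewrite /cosingleton_basis bM inE cardsC1 card_ord.
apply/setP => B; rewrite inE; apply/idP/idP => [BM|cB]; first by rewrite card_basis // rn.
have /cards1P[c Ec] : #|~: B| == 1 by have := cardsC B; rewrite card_ord (eqP cB); lia.
by rewrite -[B]setCK Ec; apply: allC; rewrite mem_enum.
Qed.

Lemma lexfirst_rank1 s : matroid_rank = 1 ->
  lexfirst s M = [set first_of singleton_basis ord0 (pseq s)].
Proof.
move=> r1; set L := singleton_basis.
have [l0 Ll0] := exists_singleton_basis r1.
have hasL : has L (pseq s) by apply/hasP; exists l0; rewrite ?mem_pseq.
have hk : find L (pseq s) < n.+1 by move: hasL; rewrite has_find size_pseq.
have sk : s (Ordinal hk) = first_of L ord0 (pseq s) by rewrite /first_of -nth_pseq.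
have Lk : L (s (Ordinal hk)) by rewrite sk /first_of nth_find.
rewrite -sk; apply: lexfirst_eq => // B' /(basis_rank1 r1)[l -> Ll] nlk.
have kl : s (Ordinal hk) != l by apply: contraNneq nlk => ->.
apply/existsP; exists (Ordinal hk); rewrite !inE eqxx kl /=.
apply/forallP => j; apply/implyP => jk; rewrite !inE.
have nLj : ~~ L (s j) by rewrite -nth_pseq (before_find _ jk).
have sjk : (s j == s (Ordinal hk)) = false by apply: contraNF nLj => /eqP ->.
have sjl : (s j == l) = false by apply: contraNF nLj => /eqP ->.
by rewrite sjk sjl.
Qed.

Lemma lexfirst_corank1 s : matroid_rank = n ->
  lexfirst s M = [set~ first_of cosingleton_basis ord0 (rev (pseq s))].
Proof.
move=> rn; set C := cosingleton_basis.
have [c0 Cc0] := exists_cosingleton_basis rn.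
have hasC : has C (rev (pseq s)) by apply/hasP; exists c0; rewrite ?mem_rev ?mem_pseq.
have hk : find C (rev (pseq s)) < n.+1 by move: hasC; rewrite has_find size_rev size_pseq.
have hK : n - find C (rev (pseq s)) < n.+1 by rewrite ltnS leq_subr.
set K := Ordinal hK.
have sK : s K = first_of C ord0 (rev (pseq s)).
  by rewrite /first_of nth_rev size_pseq // -nth_pseq subSS.
have CK : C (s K) by rewrite sK /first_of nth_find.
have after (j : 'I_n.+1) : K < j -> ~~ C (s j).
  move=> Kj; have jn : j <= n by rewrite -ltnS.
  have jK : n - j < find C (rev (pseq s)) by rewrite /= in Kj; lia.
  have := before_find ord0 jK; rewrite nth_rev ?size_pseq; last lia.
  by rewrite (_ : n.+1 - (n - j).+1 = j)%N ?nth_pseq => [->|]; last lia.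
rewrite -sK; apply: lexfirst_eq => // B' /(basis_corank1 rn)[l -> Cl] nlK.
have lK : l != s K by apply: contraNneq nlK => ->.
set j0 := (s^-1)%g l; have sj0 : s j0 = l by rewrite permKV.
have j0K : j0 < K.
  rewrite ltn_neqAle leqNgt; apply/andP; split.
    by apply: contra lK => /eqP/val_inj jK; rewrite -sj0 jK.
  by apply: (contra (after j0)); rewrite sj0 negbK.
apply/existsP; exists j0; rewrite !inE sj0 eqxx lK /=.
apply/forallP => j; apply/implyP => jj0; rewrite !inE.
have sjl : (s j == l) = false.
  by rewrite -sj0 (inj_eq perm_inj); apply: contraTF jj0 => /eqP ->; rewrite ltnn.
have sjK : (s j == s K) = false.
  by rewrite (inj_eq perm_inj); apply: contraTF (ltn_trans jj0 j0K) => /eqP ->; rewrite ltnn.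
by rewrite sjl sjK.
Qed.
End Matroid.

Local Open Scope ring_scope.

Section PathWeight.
Variables (K : fieldType) (T : eqType) (a : T -> K).
Hypothesis a_inj : injective a.

Fixpoint path_weight (p : seq T) : K :=
  if p is x :: q then (if q is y :: _ then (a x - a y)^-1 * path_weight q else 1) else 1.

Arguments path_weight : simpl nomatch.
Local Notation W := path_weight.

Definition lagrange_coef (S : seq T) (y : T) : K := \prod_(w <- S | w != y) (a y - a w)^-1.

Lemma subr_inj_neq0 x y : x != y -> a x - a y != 0.
Proof. by rewrite subr_eq0 (inj_eq a_inj). Qed.

Lemma lagrange_coef_cons z S y : z != y ->
  lagrange_coef (z :: S) y = (a y - a z)^-1 * lagrange_coef S y.
Proof. by move=> zy; rewrite /lagrange_coef big_cons zy. Qed.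

Lemma lagrange_coef_head z S : z \notin S ->
  lagrange_coef (z :: S) z = \prod_(w <- S) (a z - a w)^-1.
Proof.
move=> zS; rewrite /lagrange_coef big_cons eqxx big_seq_cond [RHS]big_seq.
by apply: eq_bigl => w; apply/andb_idr; apply: contraTneq => ->.
Qed.

Lemma partial_fractions (S : seq T) (v : K) : uniq S -> S != [::] ->
  (forall w, w \in S -> v != a w) ->
  \prod_(w <- S) (v - a w)^-1 = \sum_(y <- S) (v - a y)^-1 * lagrange_coef S y.
Proof.
elim: S v => [//|z S IH] v /andP[zS US] _ hv.
have hvS w : w \in S -> v != a w by move=> wS; apply: hv; rewrite inE wS orbT.
have hvz : v - a z != 0 by rewrite subr_eq0 hv ?mem_head.
rewrite big_cons big_cons lagrange_coef_head //.
have [->|nS] := eqVneq S [::]; first by rewrite !big_nil mulr1 addr0.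
rewrite IH // (IH (a z)) //; last first.
  by move=> w wS; rewrite (inj_eq a_inj); apply: contraNneq zS => ->.
rewrite !big_distrr -big_split /= big_seq [RHS]big_seq; apply: eq_bigr => y yS.
have zy : z != y by apply: contraNneq zS => ->.
have hvy : v - a y != 0 by rewrite subr_eq0 hvS.
have hzy := subr_inj_neq0 zy; have hyz : a y - a z != 0 by rewrite subr_inj_neq0 // eq_sym.
by rewrite lagrange_coef_cons //; field; rewrite hvz hvy hzy hyz.
Qed.

Lemma sum_path_weight_cons (x : T) (S : seq T) : uniq (x :: S) ->
  \sum_(t <- permutations S) W (x :: t) = \prod_(w <- S) (a x - a w)^-1.
Proof.
have [m] := ubnP (size S); elim: m => // m IH in x S *.
have [->|nS] := eqVneq S [::]; first by rewrite big_seq1 big_nil.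
move=> szS /andP[xS US].
rewrite (partial_fractions US) //; last first.
  by move=> w wS; rewrite (inj_eq a_inj); apply: contraNneq xS => ->.
rewrite big_permutations_cons //; apply: eq_big_seq => y yS.
rewrite -big_distrr IH; first by rewrite rem_filter // big_filter.
- by rewrite size_rem // -ltnS prednK // lt0n size_eq0.
- by rewrite /= mem_rem_uniqF ?rem_uniq.
Qed.

Lemma path_weight_nth x0 p :
  W p = \prod_(i < (size p).-1) (a (nth x0 p i) - a (nth x0 p i.+1))^-1.
Proof.
elim: p => [|x [|y q] IH]; rewrite ?big_ord0 //.
by rewrite [W _]/= IH /= big_ord_recl.
Qed.

Lemma path_weight_rcons p y : p != [::] ->
  W (rcons p y) = W p * (a (last y p) - a y)^-1.
Proof.
case: p => [//|x p] _; elim: p x => [|z p IH] x /=; first by rewrite mul1r mulr1.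
by rewrite IH mulrA.
Qed.

Lemma path_weight_rev p : W (rev p) = (-1) ^+ (size p).-1 * W p.
Proof.
elim: p => [|x [|y q] IH]; rewrite ?expr0 ?mul1r //.
rewrite rev_cons path_weight_rcons; last by rewrite -size_eq0 size_rev.
rewrite IH rev_cons last_rcons /= -opprB invrN exprS.
by ring.
Qed.

(* The left-hand side is sum_y prod_(w != y) 1/(a y - a w) over the nodes b :: N. *)
Lemma partial_fractions_at_node (N : seq T) (b : T) : uniq N -> b \notin N ->
  \prod_(w <- N) (a b - a w)^-1 + \sum_(y <- N) (a y - a b)^-1 * lagrange_coef N y =
  (N == [::])%:R.
Proof.
move=> UN bN; have [->|nN] := eqVneq N [::]; first by rewrite !big_nil addr0.
rewrite (partial_fractions UN) //; last first.
  by move=> w wN; rewrite (inj_eq a_inj); apply: contraNneq bN => ->.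
rewrite -big_split /= big1 // => y _.
by rewrite -mulrDl -opprB invrN addNr mul0r.
Qed.

Lemma partial_fractions_two_nodes (N : seq T) (x b : T) :
  uniq N -> x \notin N -> b \notin N -> x != b ->
  (a x - a b)^-1 * \prod_(w <- N) (a b - a w)^-1 +
  \sum_(y <- N) (a x - a y)^-1 * ((a y - a b)^-1 * lagrange_coef N y) =
  (a x - a b)^-1 * \prod_(w <- N) (a x - a w)^-1.
Proof.
move=> UN xN bN xb; have [->|nN] := eqVneq N [::]; first by rewrite !big_nil addr0.
have hxb := subr_inj_neq0 xb.
have Ex : \sum_(y <- N) (a x - a y)^-1 * ((a y - a b)^-1 * lagrange_coef N y) =
  (a x - a b)^-1 * (\sum_(y <- N) (a x - a y)^-1 * lagrange_coef N y +
                    \sum_(y <- N) (a y - a b)^-1 * lagrange_coef N y).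
  rewrite -big_split big_distrr /=; apply: eq_big_seq => y yN.
  have hxy : a x - a y != 0 by apply: subr_inj_neq0; apply: contraNneq xN => ->.
  have hyb : a y - a b != 0 by apply: subr_inj_neq0; apply: contraNneq bN => <-.
  by field; rewrite hxb hxy hyb.
rewrite Ex -(partial_fractions UN) //; last first.
  by move=> w wN; rewrite (inj_eq a_inj); apply: contraNneq xN => ->.
have := partial_fractions_at_node UN bN; rewrite (negbTE nN) => E.
by rewrite -mulrDr addrCA E addr0.
Qed.

Lemma lagrange_coefE S y : uniq S -> lagrange_coef S y = \prod_(w <- rem y S) (a y - a w)^-1.
Proof. by move=> US; rewrite rem_filter // big_filter. Qed.

Variables (L : pred T) (x0 : T).
Local Notation first := (first_of L x0).

Lemma lagrange_coef_filter S b : L b ->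
  lagrange_coef S b =
  \prod_(w <- [seq w <- S | ~~ L w]) (a b - a w)^-1 * lagrange_coef [seq w <- S | L w] b.
Proof.
move=> Lb; rewrite /lagrange_coef big_filter big_filter_cond (bigID L) /= mulrC.
congr (_ * _); apply: eq_bigl => w; last by rewrite andbC.
by apply/andb_idl; apply: contraNneq => ->.
Qed.

Lemma sum_path_weight_cons_first (x b : T) (S : seq T) :
  uniq (x :: S) -> b \in S -> L b ->
  \sum_(t <- permutations S | first t == b) W (x :: t) =
  (a x - a b)^-1 * \prod_(w <- [seq w <- S | ~~ L w]) (a x - a w)^-1 *
  lagrange_coef [seq w <- S | L w] b.
Proof.
have [m] := ubnP (size S); elim: m => // m IH in x S *.
move=> szS /andP[xS US] bS Lb.
set N := [seq w <- S | ~~ L w]; set D := lagrange_coef [seq w <- S | L w] b.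
have UN : uniq N by apply: filter_uniq.
have xN : x \notin N by rewrite mem_filter negb_and xS orbT.
have bN : b \notin N by rewrite mem_filter Lb.
have xb : x != b by apply: contraNneq xS => ->.
rewrite big_permutations_first_of //=.
rewrite -big_distrr /= sum_path_weight_cons; last by rewrite /= mem_rem_uniqF ?rem_uniq.
rewrite -lagrange_coefE // (lagrange_coef_filter _ Lb) -/N -/D.
rewrite -(partial_fractions_two_nodes UN xN bN xb) mulrDl mulrA; congr (_ + _).
rewrite -big_filter big_distrl /=; apply: eq_big_seq => y.
rewrite mem_filter => /andP[Ly yS].
rewrite -big_distrr IH //.
- have yL : y \notin [seq w <- S | L w] by rewrite mem_filter (negbTE Ly).
  by rewrite !filter_rem // (rem_id yL) -lagrange_coefE //= !mulrA.
- by rewrite size_rem // -ltnS prednK // lt0n size_eq0; apply: contraTneq yS => ->.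
- by rewrite /= mem_rem_uniqF ?rem_uniq.
- by rewrite mem_rem_uniq // inE bS andbT; apply: contraNneq Ly => <-.
Qed.

Lemma sum_path_weight_first (b : T) (S : seq T) : uniq S -> b \in S -> L b ->
  \sum_(t <- permutations S | first t == b) W t = (all L S)%:R * lagrange_coef S b.
Proof.
move=> US bS Lb.
set N := [seq w <- S | ~~ L w]; set D := lagrange_coef [seq w <- S | L w] b.
have allLE : all L S = (N == [::]) by rewrite -[all L S]negbK -has_predC has_filter negbK.
rewrite big_permutations_first_of //= sum_path_weight_cons; last first.
  by rewrite /= mem_rem_uniqF ?rem_uniq.
rewrite -lagrange_coefE // (lagrange_coef_filter _ Lb) -/N -/D.
rewrite -[\sum_(y <- S | ~~ L y) _]big_filter -/N.
have -> : \sum_(y <- N) \sum_(t <- permutations (rem y S) | first t == b) W (y :: t) =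
          \sum_(y <- N) (a y - a b)^-1 * lagrange_coef N y * D.
  apply: eq_big_seq => y; rewrite mem_filter => /andP[Ly yS].
  have Uy : uniq (y :: rem y S) by rewrite /= mem_rem_uniqF ?rem_uniq.
  have bSy : b \in rem y S by rewrite mem_rem_uniq // inE bS andbT; apply: contraNneq Ly => <-.
  rewrite sum_path_weight_cons_first //.
  have yL : y \notin [seq w <- S | L w] by rewrite mem_filter (negbTE Ly).
  by rewrite !filter_rem // (rem_id yL) -lagrange_coefE ?filter_uniq.
rewrite -big_distrl -mulrDl partial_fractions_at_node ?filter_uniq ?mem_filter ?Lb //.
by rewrite allLE; case: eqP => [->|_]; rewrite ?big_nil ?mul1r ?mul0r.
Qed.
End PathWeight.

Section PathWeightSums.
Variables (K : fieldType) (T : eqType) (a : T -> K).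
Hypothesis a_inj : injective a.
Local Notation W := (path_weight a).

Lemma sum_path_weight (S : seq T) : uniq S -> S != [::] ->
  \sum_(t <- permutations S) W t = (size S == 1)%:R.
Proof.
case: S => [//|z S] US _.
(* The case L = pred1 z of sum_path_weight_first, whose condition holds for all t. *)
have first_z t : t \in permutations (z :: S) -> first_of (pred1 z) z t == z.
  rewrite mem_permutations => /perm_mem zt.
  have /first_of_in : has (pred1 z) t by apply/hasP; exists z; rewrite ?zt ?mem_head /=.
  by move/(_ z); rewrite mem_filter => /andP[].
have := @sum_path_weight_first _ _ _ a_inj (pred1 z) z z _ US (mem_head z S) (eqxx z).
rewrite big_seq_cond (eq_bigl (mem (permutations (z :: S)))) -?big_seq => [->|t]; last first.
  exact/andb_idr/first_z.
rewrite /lagrange_coef big_cons eqxx /=; case: S US {first_z} => [|y S] /=.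
  by rewrite eqxx big_nil mulr1.
by rewrite inE negb_or eq_sym => /andP[/andP[/negbTE -> _] _]; rewrite andbF mul0r.
Qed.

Lemma sum_path_weight_pole (L : pred T) (x0 : T) (S : seq T) (v : K) :
  uniq S -> has L S -> (forall w, w \in S -> v != a w) ->
  \sum_(t <- permutations S) (v - a (first_of L x0 t))^-1 * W t =
  (all L S)%:R * \prod_(w <- S) (v - a w)^-1.
Proof.
move=> US hL hv.
rewrite (@big_partition_seq _ _ _ _ _ _ _ (first_of L x0) _ (filter_uniq L US)); last first.
  move=> t; rewrite mem_permutations => pt.
  by rewrite -(perm_mem (perm_filter L pt)) first_of_in // (perm_has _ pt).
under eq_big_seq => b.
  rewrite mem_filter => /andP[Lb bS].
  rewrite (eq_bigr (fun t => (v - a b)^-1 * W t)) => [|t /eqP -> //].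
  rewrite -big_distrr /= (sum_path_weight_first a_inj x0 US bS Lb).
  over.
have [allL|_] := boolP (all L S); last by rewrite big1 ?mul0r // => b _; rewrite !mul0r mulr0.
rewrite (all_filterP allL) mul1r (partial_fractions a_inj US) //; last first.
  by apply: contraTneq hL => ->.
by apply: eq_bigr => b _; rewrite mul1r.
Qed.

Lemma sum_path_weight_pole_rev (L : pred T) (x0 : T) (S : seq T) (v : K) :
  uniq S -> has L S -> (forall w, w \in S -> v != a w) ->
  \sum_(t <- permutations S) (v - a (first_of L x0 (rev t)))^-1 * W t =
  (-1) ^+ (size S).-1 * (all L S)%:R * \prod_(w <- S) (v - a w)^-1.
Proof.
move=> US hL hv; rewrite -big_permutations_rev -mulrA -(sum_path_weight_pole x0) // big_distrr /=.
rewrite big_seq [RHS]big_seq; apply: eq_bigr => t; rewrite mem_permutations => /perm_size st.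
by rewrite revK path_weight_rev st mulrCA.
Qed.
End PathWeightSums.

Section HomogeneousPart.
Variable n : nat.

Lemma homog_part_prod_X (I : {set 'I_n.+1}) d :
  homog_part d (\prod_(i in I) ('X_i : HT n)) = if #|I| == d then \prod_(i in I) 'X_i else 0.
Proof.
have -> : \prod_(i in I) ('X_i : HT n) = 'X_[\sum_(i in I) U_(i)].
  by rewrite (big_morph (fun m : 'X_{1..n.+1} => ('X_[m] : HT n)) (@mpolyXD _ _) (@mpolyX0 _ _)).
have degI : mdeg (\sum_(i in I) U_(i))%MM = #|I|.
  by rewrite mdeg_sum (eq_bigr (fun=> 1%N)) ?sum1_card // => i _; rewrite mdeg1.
by rewrite /homog_part pihomogX; congr (if _ == d then _ else _); exact: degI.
Qed.

Lemma homog_part_prod (J : {set 'I_n.+1}) (c : int) d :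
  homog_part d (\prod_(i in J) (1 + c *: ('X_i : HT n))) =
  c ^+ d *: \sum_(I : {set 'I_n.+1} | (I \subset J) && (#|I| == d)) \prod_(i in I) 'X_i.
Proof.
rewrite big_mkcond (eq_bigr (fun i => (if i \in J then c *: 'X_i else 0) + 1)); last first.
  by move=> i _; case: (i \in J); rewrite ?add0r // addrC.
rewrite bigA_distr /homog_part raddf_sum /= scaler_sumr [RHS]big_mkcond /=.
apply: eq_bigr => I _; rewrite -big_mkcond /=.
have [IJ|/subsetPn[i iI iJ]] := boolP (I \subset J); last first.
  by rewrite (bigD1 i) //= (negbTE iJ) mul0r raddf0.
rewrite (eq_bigr (fun i => c *: 'X_i)) => [|i iI]; last by rewrite (subsetP IJ).
rewrite scaler_prod prodr_const linearZ /= -/(homog_part d _) homog_part_prod_X /=.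
by case: eqP => [->|_]; rewrite ?scaler0.
Qed.

Lemma homog_part_prod_gt (J : {set 'I_n.+1}) (c : int) d : (#|J| < d)%N ->
  homog_part d (\prod_(i in J) (1 + c *: ('X_i : HT n))) = 0.
Proof.
move=> Jd; rewrite homog_part_prod big_pred0 ?scaler0 // => I.
by apply: contraTF Jd => /andP[/subset_leq_card IJ /eqP <-]; rewrite -leqNgt.
Qed.

(* Here and in [homog_part_prod_deg0] the degree is given by an equation, so that
   it can be instantiated with the [n] that also indexes the variables. *)
Lemma homog_part_prod_card (J : {set 'I_n.+1}) (c : int) d : #|J| = d ->
  homog_part d (\prod_(i in J) (1 + c *: ('X_i : HT n))) = c ^+ d *: \prod_(i in J) 'X_i.
Proof.
move=> <-; rewrite homog_part_prod (big_pred1 J) // => I; rewrite andbC.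
by apply/andP/eqP => [[/eqP cI IJ]|->]; [apply/eqP; rewrite eqEcard IJ cI leqnn | split].
Qed.

Lemma homog_part_prod_deg0 (J : {set 'I_n.+1}) (c : int) d : d = 0%N ->
  homog_part d (\prod_(i in J) (1 + c *: ('X_i : HT n))) = 1.
Proof.
move=> ->; rewrite homog_part_prod expr0 scale1r (big_pred1 set0) ?big_set0 // => I.
by rewrite cards_eq0 andb_idl // => /eqP ->; apply: sub0set.
Qed.
End HomogeneousPart.

Section Localization.
Variable n : nat.
Local Notation K := {fraction HT n}.
Local Notation tofrac := (@FracField.tofrac (HT n)).
Local Notation e := (enum 'I_n.+1).

Definition tvar (i : 'I_n.+1) : K := tofrac 'X_i.
Definition tprod : K := \prod_i tvar i.
Local Notation W := (path_weight tvar).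

Lemma tvar_inj : injective tvar.
Proof.
move=> i j /eqP; rewrite tofrac_eq => /eqP /(congr1 (fun p : HT n => p@_U_(i))).
by rewrite !mcoeffXU eqxx; case: eqP => // _ /eqP; rewrite oner_eq0.
Qed.

Lemma tvar_neq0 i : tvar i != 0.
Proof.
rewrite tofrac_eq0; apply/negP => /eqP /(congr1 (fun p : HT n => p@_U_(i))).
by rewrite mcoeffXU eqxx mcoeff0 => /eqP; rewrite oner_eq0.
Qed.

Lemma tprod_neq0 : tprod != 0.
Proof. by apply/prodf_neq0 => i _; apply: tvar_neq0. Qed.

Lemma tofrac_prod_setC1 b : tofrac (\prod_(i in [set~ b]) 'X_i) = tprod / tvar b.
Proof.
rewrite rmorph_prod /tprod [in RHS](bigD1 b) //= mulrAC divff ?tvar_neq0 // mul1r.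
by apply: eq_bigl => i; rewrite !inE.
Qed.

Lemma inv_euler_tangent s : (tofrac (euler_tangent s))^-1 = W (pseq s).
Proof.
rewrite (path_weight_nth _ ord0) size_pseq rmorph_prod -prodfV; apply: eq_bigr => i _.
by rewrite rmorphB -!nth_pseq.
Qed.

Lemma prod_inv_neg_tvar : \prod_(w <- e) (0 - tvar w)^-1 = (-1) ^+ n.+1 / tprod.
Proof.
rewrite big_enum /= (eq_bigr (fun w => - (tvar w)^-1)) => [|w _]; last by rewrite sub0r invrN.
by rewrite prodrN card_ord prodfV.
Qed.

Lemma sum_inv_tvar_first (L : pred 'I_n.+1) : has L e ->
  \sum_(p <- permutations e) (tvar (first_of L ord0 p))^-1 * W p =
  (-1) ^+ n * (all L e)%:R / tprod.
Proof.
move=> hL; apply: oppr_inj; rewrite -sumrN.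
rewrite (eq_bigr (fun p => (0 - tvar (first_of L ord0 p))^-1 * W p)) => [|p _]; last first.
  by rewrite sub0r invrN mulNr.
rewrite (sum_path_weight_pole tvar_inj) ?enum_uniq // => [|w _]; last by rewrite eq_sym tvar_neq0.
by rewrite prod_inv_neg_tvar exprS; set sg := (-1) ^+ n; ring.
Qed.

Lemma sum_inv_tvar_first_rev (L : pred 'I_n.+1) : has L e ->
  \sum_(p <- permutations e) (tvar (first_of L ord0 (rev p)))^-1 * W p =
  (all L e)%:R / tprod.
Proof.
move=> hL; apply: oppr_inj; rewrite -sumrN.
rewrite (eq_bigr (fun p => (0 - tvar (first_of L ord0 (rev p)))^-1 * W p)) => [|p _]; last first.
  by rewrite sub0r invrN mulNr.
rewrite (sum_path_weight_pole_rev tvar_inj) ?enum_uniq // => [|w _]; last first.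
  by rewrite eq_sym tvar_neq0.
rewrite prod_inv_neg_tvar size_enum_ord exprS.
rewrite /=; transitivity (- ((-1) ^+ n) ^+ 2 * ((all L e)%:R / tprod)).
  by set sg := (-1) ^+ n; ring.
by rewrite sqrr_sign mulN1r.
Qed.

Lemma integral_XE_pseq (c : {perm 'I_n.+1} -> HT n) :
  integral_XE c = \sum_s tofrac (homog_part n (c s)) * W (pseq s).
Proof. by apply: eq_bigr => s _; rewrite inv_euler_tangent. Qed.

Lemma integral_XE_const (J : {set 'I_n.+1}) (c : int) (cc : {perm 'I_n.+1} -> HT n) :
  (forall s, cc s = \prod_(i in J) (1 + c *: 'X_i)) -> integral_XE cc = (n == 0)%:R.
Proof.
move=> ccE; rewrite integral_XE_pseq.
under eq_bigr do rewrite ccE.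
have ne : e != [::] by rewrite -size_eq0 size_enum_ord.
rewrite -big_distrr /= (big_perm_pseq _ W) (sum_path_weight tvar_inj (enum_uniq _) ne).
rewrite size_enum_ord eqSS; case: eqP => [n0|_]; last by rewrite mulr0.
by rewrite homog_part_prod_deg0 // rmorph1 mulr1.
Qed.

Lemma tofrac_scale (c : int) (p : HT n) : tofrac (c *: p) = c%:~R * tofrac p.
Proof. by rewrite -[c in LHS]intz scaler_int -mulrzl rmorphM rmorph_int. Qed.

Lemma integral_XE_first (L : pred 'I_n.+1) (c : int) (cc : {perm 'I_n.+1} -> HT n) :
  has L e ->
  (forall s, homog_part n (cc s) = c *: \prod_(i in [set~ first_of L ord0 (pseq s)]) 'X_i) ->
  integral_XE cc = c%:~R * (-1) ^+ n * (all L e)%:R.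
Proof.
move=> hL ccE; rewrite integral_XE_pseq.
under eq_bigr do rewrite ccE tofrac_scale tofrac_prod_setC1 -!mulrA.
rewrite -!big_distrr /= (big_perm_pseq _ (fun p => (tvar (first_of L ord0 p))^-1 * W p)).
by rewrite (sum_inv_tvar_first hL) [tprod * _]mulrC divfK ?tprod_neq0 ?mulrA.
Qed.

Lemma integral_XE_first_rev (L : pred 'I_n.+1) (c : int) (cc : {perm 'I_n.+1} -> HT n) :
  has L e ->
  (forall s, homog_part n (cc s) = c *: \prod_(i in [set~ first_of L ord0 (rev (pseq s))]) 'X_i) ->
  integral_XE cc = c%:~R * (all L e)%:R.
Proof.
move=> hL ccE; rewrite integral_XE_pseq.
under eq_bigr do rewrite ccE tofrac_scale tofrac_prod_setC1 -!mulrA.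
rewrite -!big_distrr /= (big_perm_pseq _ (fun p => (tvar (first_of L ord0 (rev p)))^-1 * W p)).
by rewrite (sum_inv_tvar_first_rev hL) [tprod * _]mulrC divfK ?tprod_neq0.
Qed.
End Localization.

Section Integrals.
Variables (n : nat) (M : matroid n).

Lemma cQE s : cQ M s = \prod_(i in ~: lexfirst s M) (1 + (-1) *: ('X_i : HT n)).
Proof. by apply: eq_big => [i|i _]; rewrite ?inE ?scaleN1r. Qed.

Lemma cSdualE s : cSdual M s = \prod_(i in lexfirst s M) (1 + 1 *: ('X_i : HT n)).
Proof. by apply: eq_bigr => i _; rewrite scale1r. Qed.

Lemma integral_cQ :
  integral_XE (cQ M) = (if is_loop M || (bases M == uniform_bases n 1) then 1 else 0).
Proof.
have notU1 : matroid_rank M != 1 -> (bases M == uniform_bases n 1) = false.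
  by move=> r1; apply: contraNF r1 => /eqP/rank_uniform ->.
rewrite is_loopE; case: (ltngtP (matroid_rank M) 1) => [r0 | r_gt1 | r1].
- have {}r0 : matroid_rank M = 0 by lia.
  rewrite (@integral_XE_const _ setT (-1)) => [|s]; last first.
    rewrite cQE (_ : lexfirst s M = set0) ?setC0 //.
    by apply/eqP; rewrite -cards_eq0 card_lexfirst r0.
  by rewrite r0 notU1 ?r0 // andbT orbF; case: (n == 0).
- rewrite notU1 ?(gtn_eqF (ltnW r_gt1)) ?andbF; last by rewrite neq_ltn r_gt1 orbT.
  rewrite [integral_XE _]big1 // => s _; rewrite cQE homog_part_prod_gt ?rmorph0 ?mul0r //.
  by have := cardsC (lexfirst s M); rewrite card_ord card_lexfirst; lia.
rewrite r1 andbF uniform_rank1E //= (@integral_XE_first _ (singleton_basis M) ((-1) ^+ n)).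
- by rewrite intr_sign -expr2 sqrr_sign mul1r; case: all.
- by have [l Ll] := exists_singleton_basis r1; apply/hasP; exists l; rewrite ?mem_enum.
by move=> s; rewrite cQE lexfirst_rank1 // homog_part_prod_card // cardsC1 card_ord.
Qed.

Lemma integral_cSdual :
  integral_XE (cSdual M) = (if is_coloop M || (bases M == uniform_bases n n) then 1 else 0).
Proof.
have notUn : matroid_rank M != n -> (bases M == uniform_bases n n) = false.
  by move=> rn; apply: contraNF rn => /eqP/rank_uniform ->.
have rle : (matroid_rank M <= n.+1)%N.
  have /set0Pn[B0 /card_basis <-] := bases_neq0 M.
  by rewrite (leq_trans (max_card _)) ?card_ord.
rewrite is_coloopE; case: (ltngtP (matroid_rank M) n) => [r_lt | r_gt | rn].
- rewrite notUn ?(ltn_eqF (leqW r_lt)) ?andbF //; last by rewrite ltn_eqF.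
  rewrite [integral_XE _]big1 // => s _.
  by rewrite cSdualE homog_part_prod_gt ?rmorph0 ?mul0r // card_lexfirst.
- have {}rT : matroid_rank M = n.+1 by lia.
  rewrite (@integral_XE_const _ setT 1) => [|s]; last first.
    rewrite cSdualE (_ : lexfirst s M = setT) //.
    by apply/eqP; rewrite eqEcard subsetT cardsT card_ord card_lexfirst rT ltnSn.
  by rewrite rT eqxx andbT notUn ?rT ?(gtn_eqF (ltnSn n)) // orbF; case: (n == 0).
rewrite rn (ltn_eqF (ltnSn n)) andbF uniform_corank1E //=.
rewrite (@integral_XE_first_rev _ (cosingleton_basis M) 1).
- by rewrite mul1r; case: all.
- by have [c Cc] := exists_cosingleton_basis rn; apply/hasP; exists c; rewrite ?mem_enum.
by move=> s; rewrite cSdualE lexfirst_corank1 // homog_part_prod_card ?expr1n // cardsC1 card_ord.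
Qed.
End Integrals.

Theorem lemma7p3 (n : nat) (M : matroid n) :
  integral_XE (cQ M)
    = (if is_loop M || (bases M == uniform_bases n 1) then 1 else 0)
  /\
  integral_XE (cSdual M)
    = (if is_coloop M || (bases M == uniform_bases n n) then 1 else 0).
Proof. by split; [apply: integral_cQ | apply: integral_cSdual]. Qed.
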